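(* Let $A$ be a finite set, $\bot,\dagger\notin A$ distinct extra symbols, $N\geq1$, and let $\mathsf L$, $\pi$ and $\zeta_t$ ($t>0$) be as in the context. Let $\mu_{\mathsf L}$ denote the Möbius function of the finite poset $\mathsf L$ (the inverse of the matrix $\zeta_{\mathsf L}(x,y)=1$ if $x\leq y$ and $0$ otherwise). Then for all $x,y\in\mathsf L$, $$\zeta_t^{-1}(x,y)=\pi(y|x)^t\,\mu_{\mathsf L}(x,y).$$
   Context: $A^*$ is the set of finite strings over $A$, $|x|$ denotes length (with $\bot,\dagger$ counted). $\mathsf L=\{\bot a : a\in A^*,\ |a|\leq N-1\}\sqcup\{\bot a\dagger : a\in A^*,\ |a|<N-1\}$, partially ordered by the prefix relation ($x\leq y$ iff $y=xa'$ for some string $a'$). Strings $\bot a$ are unfinished texts. For each unfinished text $x\in\mathsf L$ with $|x|\leq N-1$ a probability mass function $p(-|x)$ on $A\cup\{\dagger\}$ is given. Define $\pi(y|x)=1$ if $x=y$; $0$ if $x\not\leq y$; and if $x=\bot a_1\cdots a_t$ is a proper prefix of $y=xa_{t+1}\cdots a_{t+k}$, $\pi(y|x)=\prod_{i=1}^k p(a_{t+i}\mid\bot a_1\cdots a_{t+i-1})$. For $t>0$, $\zeta_t$ is the $\mathsf L\times\mathsf L$ matrix $\zeta_t(x,y)=\pi(y|x)^t$ (which is invertible). *)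

From HB Require Import structures.
From mathcomp Require Import all_boot all_order all_algebra.
From mathcomp Require Import reals exp.
Set Implicit Arguments. Unset Strict Implicit. Unset Printing Implicit Defensive.
Import Order.TTheory GRing.Theory Num.Theory.
Local Open Scope ring_scope.

(* Texts are encoded as a pair (word a, flag): flag = false encodes the
   unfinished text "bot a", flag = true encodes the finished text "bot a dagger".
   bot and dagger are thus distinct symbols not in A by construction. *)

Definition Ltext (A : finType) (N : nat) : finType :=
  {u : {i : 'I_N & i.-tuple A} * bool | u.2 ==> (tag u.1 < N.-1)%N}.

Definition word (A : finType) (N : nat) (x : Ltext A N) : seq A :=
  tval (tagged (val x).1).
Definition fin (A : finType) (N : nat) (x : Ltext A N) : bool := (val x).2.

Definition Lle (A : finType) (N : nat) (x y : Ltext A N) : bool :=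
  if fin x then x == y else prefix (word x) (word y).

(* pi(y|x); p w c is p(c | bot w), where c = Some a is a letter a and
   c = None is dagger. *)
Definition piL (A : finType) (N : nat) (R : realType) (p : seq A -> option A -> R)
    (x y : Ltext A N) : R :=
  if x == y then 1
  else if Lle x y then
    (\prod_(size (word x) <= i < size (word y)) p (take i (word y)) (onth (word y) i))
      * (if fin y then p (word y) None else 1)
  else 0.

Definition zeta_t (A : finType) (N : nat) (R : realType) (p : seq A -> option A -> R)
    (t : R) : 'M[R]_#|Ltext A N| :=
  \matrix_(i, j) (piL p (enum_val i) (enum_val j)) `^ t.

Definition zetaL (A : finType) (N : nat) (R : realType) : 'M[R]_#|Ltext A N| :=
  \matrix_(i, j) (Lle (enum_val i) (enum_val j))%:R.

Definition mobiusL (A : finType) (N : nat) (R : realType) (x y : Ltext A N) : R :=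
  invmx (zetaL A N R) (enum_rank x) (enum_rank y).

From HB Require Import structures.
From mathcomp Require Import all_boot all_order all_algebra.
From mathcomp Require Import reals exp.
Import Order.TTheory GRing.Theory Num.Theory.
Local Open Scope ring_scope.
Set Implicit Arguments. Unset Strict Implicit.

(* For x <= y <= z in L we have pi(z|x) = pi(y|x) pi(z|y), and since pi >= 0
   the same holds for pi^t.  Hence the entrywise product B |-> pi^t o B is
   multiplicative on the incidence algebra of L (matrices vanishing off the
   order) and fixes the identity.  Now zeta_t = pi^t o zeta_L, and
   mu_L = zeta_L^-1 lies in the incidence algebra, being the finite geometric
   series of the nilpotent matrix 1 - zeta_L; so
   zeta_t (pi^t o mu_L) = pi^t o (zeta_L mu_L) = 1.  Only the nonnegativity of
   the p(-|x) is used. *)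

Lemma mulmx1_invmx (R : comUnitRingType) (n : nat) (B C : 'M[R]_n) :
  B *m C = 1%:M -> invmx B = C.
Proof.
move=> BC; have [uB _] := mulmx1_unit BC.
by rewrite -[RHS](mulKmx uB) BC mulmx1.
Qed.

Section HeightIncreasing.
Variables (R : pzRingType) (n : nat) (B : 'M[R]_n) (h : 'I_n -> nat).
Hypothesis B_increasing : forall i j, B i j != 0 -> (h i < h j)%N.

Lemma height_increasing_mx_exp_eq0 k i j : (h j < h i + k)%N -> (B ^+ k) i j = 0.
Proof.
elim: k i j => [|k IHk] i j hij.
  by rewrite expr0 -idmxE mxE; case: eqVneq hij => [->|]; rewrite ?addn0 ?ltnn.
rewrite exprS -mulmxE mxE big1 // => l _.
have [->|/B_increasing hil] := eqVneq (B i l) 0; first by rewrite mul0r.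
by rewrite IHk ?mulr0 // (leq_trans hij) // addnS ltn_add2r.
Qed.

Lemma height_increasing_mx_nilpotent m : (forall i, h i < m)%N -> B ^+ m = 0.
Proof.
move=> hm; apply/matrixP => i j; rewrite mxE height_increasing_mx_exp_eq0 //.
exact: leq_trans (hm j) (leq_addl _ _).
Qed.

End HeightIncreasing.

Section IncidenceAlgebra.
Variables (R : comUnitRingType) (n : nat) (le : rel 'I_n).
Hypotheses (le_refl : reflexive le) (le_trans : transitive le).

Definition incidence_mx (B : 'M[R]_n) : Prop := forall i j, ~~ le i j -> B i j = 0.

Lemma incidence_mx1 : incidence_mx 1%:M.
Proof.
by move=> i j; rewrite mxE; case: eqVneq => // ->; rewrite le_refl.
Qed.

Lemma incidence_mxB B C : incidence_mx B -> incidence_mx C -> incidence_mx (B - C).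
Proof. by move=> hB hC i j lij; rewrite !mxE hB ?hC ?subr0. Qed.

Lemma incidence_mxM B C : incidence_mx B -> incidence_mx C -> incidence_mx (B *m C).
Proof.
move=> hB hC i j lij; rewrite mxE big1 // => k _.
have [lik|/hB->] := boolP (le i k); last by rewrite mul0r.
have [lkj|/hC->] := boolP (le k j); last by rewrite mulr0.
by move: lij; rewrite (le_trans lik lkj).
Qed.

Lemma incidence_mxX B k : incidence_mx B -> incidence_mx (B ^+ k).
Proof.
move=> hB; elim: k => [|k IHk]; first by rewrite expr0 -idmxE; exact: incidence_mx1.
by rewrite exprS -mulmxE; exact: incidence_mxM.
Qed.

Lemma incidence_mx_sum (I : Type) (r : seq I) (F : I -> 'M[R]_n) :
  (forall k, incidence_mx (F k)) -> incidence_mx (\sum_(k <- r) F k).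
Proof. by move=> hF i j lij; rewrite summxE big1 // => k _; exact: hF. Qed.

Section HadamardWeight.
Variable W : 'M[R]_n.
Hypotheses (W_diag : forall i, W i i = 1)
  (W_mul : forall i j k, le i j -> le j k -> W i k = W i j * W j k).

Definition hadamard_mx (B : 'M[R]_n) : 'M[R]_n := \matrix_(i, j) (W i j * B i j).

Lemma hadamard_mx1 : hadamard_mx 1%:M = 1%:M.
Proof.
apply/matrixP => i j; rewrite !mxE.
case: (eqVneq i j) => [->|_]; [by rewrite W_diag mul1r | by rewrite mulr0].
Qed.

Lemma hadamard_mxM B C : incidence_mx B -> incidence_mx C ->
  hadamard_mx (B *m C) = hadamard_mx B *m hadamard_mx C.
Proof.
move=> hB hC; apply/matrixP => i j; rewrite !mxE big_distrr /=.
apply: eq_bigr => k _; rewrite !mxE.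
have [lik|/hB->] := boolP (le i k); last by rewrite !(mulr0, mul0r).
have [lkj|/hC->] := boolP (le k j); last by rewrite !(mulr0, mul0r).
by rewrite (W_mul lik lkj) mulrACA.
Qed.

Lemma invmx_hadamard_mx B C : incidence_mx B -> incidence_mx C ->
  B *m C = 1%:M -> invmx (hadamard_mx B) = hadamard_mx C.
Proof.
by move=> hB hC BC; apply: mulmx1_invmx; rewrite -hadamard_mxM // BC hadamard_mx1.
Qed.

End HadamardWeight.

Hypothesis le_anti : antisymmetric le.

Definition zeta_mx : 'M[R]_n := \matrix_(i, j) (le i j)%:R.

Definition down_card (i : 'I_n) : nat := #|[pred k | le k i]|.

Lemma down_card_lt i j : le i j -> i != j -> (down_card i < down_card j)%N.
Proof.
move=> lij nij; apply: proper_card; apply/properP; split.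
  by apply/subsetP => k; rewrite !inE => /le_trans; apply.
exists j; rewrite !inE ?le_refl //.
by apply: contra nij => lji; apply/eqP/le_anti; rewrite lij lji.
Qed.

Lemma incidence_zeta_mx : incidence_mx zeta_mx.
Proof. by move=> i j lij; rewrite mxE (negbTE lij). Qed.

Lemma one_sub_zeta_mx_nilpotent : (1 - zeta_mx) ^+ n.+1 = 0.
Proof.
apply: (@height_increasing_mx_nilpotent _ _ _ down_card) => [i j|i].
  rewrite -idmxE !mxE; case: (eqVneq i j) => [->|nij]; first by rewrite le_refl subrr eqxx.
  by case: (boolP (le i j)) => [lij _|]; [exact: down_card_lt | rewrite subrr eqxx].
by rewrite ltnS /down_card (leq_trans (max_card _)) ?card_ord.
Qed.

Lemma mulmx_zeta_neumann : zeta_mx *m \sum_(k < n.+1) (1 - zeta_mx) ^+ k = 1%:M.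
Proof.
have := subrX1 (1 - zeta_mx) n.+1.
rewrite one_sub_zeta_mx_nilpotent sub0r addrAC subrr add0r mulNr => /oppr_inj.
by rewrite mulmxE idmxE.
Qed.

Lemma invmx_zeta_mx : invmx zeta_mx = \sum_(k < n.+1) (1 - zeta_mx) ^+ k.
Proof. exact/mulmx1_invmx/mulmx_zeta_neumann. Qed.

Lemma incidence_invmx_zeta_mx : incidence_mx (invmx zeta_mx).
Proof.
rewrite invmx_zeta_mx; apply: incidence_mx_sum => k; apply: incidence_mxX.
by apply: incidence_mxB; [rewrite -idmxE; exact: incidence_mx1 | exact: incidence_zeta_mx].
Qed.

Theorem invmx_hadamard_zeta_mx (W : 'M[R]_n) :
  (forall i, W i i = 1) -> (forall i j k, le i j -> le j k -> W i k = W i j * W j k) ->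
  invmx (hadamard_mx W zeta_mx) = hadamard_mx W (invmx zeta_mx).
Proof.
move=> W_diag W_mul; apply: invmx_hadamard_mx => //.
- exact: incidence_zeta_mx.
- exact: incidence_invmx_zeta_mx.
- by rewrite invmx_zeta_mx mulmx_zeta_neumann.
Qed.

End IncidenceAlgebra.

Section Texts.
Variables (A : finType) (N : nat).
Implicit Types x y z : Ltext A N.

Lemma Ltext_inj x y : word x = word y -> fin x = fin y -> x = y.
Proof.
case: x => [[[i s] b] hx]; case: y => [[[j s'] b'] hy].
rewrite /word /fin /= => ess eb; subst b'; apply: val_inj => /=.
have eij : i = j by apply: val_inj; rewrite /= -(size_tuple s) -(size_tuple s') ess.
by subst j; congr (_, _); congr existT; exact: val_inj.
Qed.

Lemma Lle_refl : reflexive (@Lle A N).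
Proof. by move=> x; rewrite /Lle eqxx prefix_refl; case: (fin x). Qed.

Lemma Lle_trans : transitive (@Lle A N).
Proof.
move=> y x z; rewrite {1}/Lle; case fx: (fin x); first by move=> /eqP ->.
by rewrite /Lle fx; case: (fin y) => [lxy /eqP <- //|]; exact: prefix_trans.
Qed.

Lemma Lle_anti : antisymmetric (@Lle A N).
Proof.
move=> x y /andP[lxy lyx].
have [fx|/negbTE fx] := boolP (fin x); first by move: lxy; rewrite /Lle fx => /eqP.
have [fy|/negbTE fy] := boolP (fin y); first by move: lyx; rewrite /Lle fy => /eqP.
move: lxy lyx; rewrite /Lle fx fy => pxy pyx.
have esize : size (word x) = size (word y).
  by apply/anti_leq; rewrite (size_prefix pxy) (size_prefix pyx).
apply: Ltext_inj; last by rewrite fx fy.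
by move: pxy; rewrite prefixE esize take_size => /eqP.
Qed.

Lemma Lle_neq_fin x y : Lle x y -> x != y -> fin x = false.
Proof. by rewrite /Lle; case: (fin x) => // ->. Qed.

Lemma size_word_fin x : (size (word x) + fin x <= N - 1)%N.
Proof.
case: x => [[[i s] b] /= hx]; rewrite /word /fin /= size_tuple subn1.
case: b hx => /= [|_]; rewrite ?addn1 ?addn0 //.
by rewrite -ltnS prednK ?ltn_ord // (leq_ltn_trans _ (ltn_ord i)).
Qed.

Section TransitionProbabilities.
Variables (R : realType) (p : seq A -> option A -> R).

Lemma piLxx x : piL p x x = 1.
Proof. by rewrite /piL eqxx. Qed.

Lemma piL_eq0 x y : ~~ Lle x y -> piL p x y = 0.
Proof.
move=> nlxy; rewrite /piL (negbTE nlxy); case: eqVneq => // exy.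
by move: nlxy; rewrite exy Lle_refl.
Qed.

Lemma piL_ge0 (p_ge0 : forall a c, (size a + 1 <= N - 1)%N -> 0 <= p a c) x y :
  0 <= piL p x y.
Proof.
rewrite /piL; case: ifP => // _; case: ifP => // _.
have hy := size_word_fin y.
apply: mulr_ge0.
  rewrite big_nat_cond; apply: prodr_ge0 => i /andP[/andP[_ hi] _]; apply: p_ge0.
  by rewrite size_take hi addn1 (leq_trans _ hy) // (leq_trans hi) ?leq_addr.
by case: (fin y) hy => // hy; exact: p_ge0.
Qed.

Lemma piL_mul x y z : Lle x y -> Lle y z -> piL p x z = piL p x y * piL p y z.
Proof.
move=> lxy lyz.
have [<-|nxy] := eqVneq x y; first by rewrite piLxx mul1r.
have [<-|nyz] := eqVneq y z; first by rewrite piLxx mulr1.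
have [exz|nxz] := eqVneq x z.
  by move: nxy; rewrite (@Lle_anti x y) ?eqxx // lxy exz lyz.
have fx := Lle_neq_fin lxy nxy; have fy := Lle_neq_fin lyz nyz.
rewrite /piL (negbTE nxy) (negbTE nyz) (negbTE nxz) lxy lyz (Lle_trans lxy lyz).
rewrite fy mulr1 mulrA; congr (_ * _).
move: lxy lyz; rewrite /Lle fx fy => /prefixP[s ey] /prefixP[s' ez].
have sxy : (size (word x) <= size (word y))%N by rewrite ey size_cat leq_addr.
have syz : (size (word y) <= size (word z))%N by rewrite ez size_cat leq_addr.
rewrite (big_cat_nat sxy syz) /=; congr (_ * _).
by apply: eq_big_nat => i /andP[_ hi]; rewrite ez take_cat onth_cat hi.
Qed.

End TransitionProbabilities.
End Texts.

Theorem corollary3p7 (A : finType) (N : nat) (hN : (1 <= N)%N) (R : realType)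
    (p : seq A -> option A -> R)
    (hp : forall a : seq A, (size a + 1 <= N - 1)%N ->
          (forall c : option A, 0 <= p a c) /\ \sum_(c : option A) p a c = 1)
    (t : R) (ht : 0 < t) (x y : Ltext A N) :
  invmx (zeta_t N p t) (enum_rank x) (enum_rank y)
    = (piL p x y) `^ t * mobiusL R x y.
Proof.
pose le : rel 'I_#|Ltext A N| := fun i j => Lle (enum_val i) (enum_val j).
pose W : 'M[R]_#|Ltext A N| := \matrix_(i, j) piL p (enum_val i) (enum_val j) `^ t.
have le_refl : reflexive le by move=> i; exact: Lle_refl.
have le_trans : transitive le by move=> j i k; exact: Lle_trans.
have le_anti : antisymmetric le by move=> i j /Lle_anti /enum_val_inj.
have pi_ge0 := piL_ge0 (fun a c ha => (hp a ha).1 c).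
have W_diag i : W i i = 1 by rewrite mxE piLxx powR1.
have W_mul i j k : le i j -> le j k -> W i k = W i j * W j k.
  by move=> lij ljk; rewrite !mxE (piL_mul p lij ljk) powRM.
have -> : zeta_t N p t = hadamard_mx W (zetaL A N R).
  apply/matrixP => i j; rewrite !mxE.
  have [lij|nlij] := boolP (le i j); first by rewrite [Lle _ _]lij mulr1.
  by rewrite [Lle _ _](negbTE nlij) mulr0 piL_eq0 // powR0 // gt_eqF.
rewrite (invmx_hadamard_zeta_mx le_refl le_trans le_anti W_diag W_mul).
by rewrite /hadamard_mx !mxE !enum_rankK.
Qed.
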